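(* Let $G(\pi_i,\pi_i')=\frac12\|\pi_i-\pi_i'\|^2$ and $\mu>0$. Let $K\ge1$, $c>1$, and $T_\sigma\ge\max\big(\frac{3}{\ln c}\ln K+\frac{\ln64}{\ln c},1\big)$. Let $\sigma^0,\dots,\sigma^K\in\mathcal X$ satisfy $$\|\pi^{\mu,\sigma^k}-\sigma^{k+1}\|\le\|\pi^{\mu,\sigma^k}-\sigma^k\|c^{-T_\sigma}\quad\text{for }k=0,\dots,K-1.$$ Assume $\sqrt{\sum_i\|\nabla_{\pi_i}v_i(\pi)\|^2}\le\zeta$ for all $\pi\in\mathcal X$. Then for any $\pi^*\in\Pi^*$, $$\|\pi^{\mu,\sigma^{K-1}}-\sigma^{K-1}\|\le\frac{2\sqrt2}{\sqrt K}\sqrt{\|\pi^*-\sigma^0\|\Big(8\|\pi^*-\sigma^0\|+\frac\zeta\mu\Big)}.$$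
   Context: Game. Let $N\ge1$. For each $i\in[N]$, $\mathcal X_i\subseteq\mathbb R^{d_i}$ is a nonempty compact convex set, and $\mathcal X=\prod_i\mathcal X_i$. Each $v_i:\mathcal X\to\mathbb R$ is differentiable, with block gradient $\nabla_{\pi_i}v_i$. The norm is Euclidean, with $\|\pi\|^2=\sum_i\|\pi_i\|^2$. The game is monotone: $\sum_i\langle\nabla_{\pi_i}v_i(\pi)-\nabla_{\pi_i}v_i(\pi'),\pi_i-\pi_i'\rangle\le0$ for all $\pi,\pi'$. A Nash equilibrium is a $\pi^*$ with $v_i(\pi^* )\ge v_i(\pi_i,\pi^*_{-i})$ for all $i$ and $\pi_i\in\mathcal X_i$. $\Pi^*$ is the set of Nash equilibria. Perturbed equilibrium. For $\mu>0$ and $\sigma\in\mathcal X$, $\pi^{\mu,\sigma}$ is the (unique) profile with $\pi_i^{\mu,\sigma}\in\arg\max_{\pi_i\in\mathcal X_i}\{v_i(\pi_i,\pi^{\mu,\sigma}_{-i})-\mu G(\pi_i,\sigma_i)\}$ for all $i$. *)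

From HB Require Import structures.
From mathcomp Require Import all_boot all_order all_algebra.
From mathcomp Require Import all_classical all_reals all_analysis.
Set Implicit Arguments. Unset Strict Implicit. Unset Printing Implicit Defensive.
Import Order.TTheory GRing.Theory Num.Theory.
Import numFieldNormedType.Exports.
Local Open Scope classical_set_scope.
Local Open Scope ring_scope.

Definition profile (R : realType) (N : nat) (d : 'I_N -> nat) : Type :=
  forall i : 'I_N, 'rV[R]_(d i).

Definition dotv (R : realType) n (u v : 'rV[R]_n) : R := \sum_(j < n) u 0 j * v 0 j.
Definition enorm (R : realType) n (u : 'rV[R]_n) : R := Num.sqrt (dotv u u).

Definition pdot (R : realType) (N : nat) (d : 'I_N -> nat) (x y : profile R d) : R :=
  \sum_(i < N) dotv (x i) (y i).
Definition pnorm (R : realType) (N : nat) (d : 'I_N -> nat) (x : profile R d) : R := Num.sqrt (pdot x x).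
Definition padd (R : realType) (N : nat) (d : 'I_N -> nat) (x y : profile R d) : profile R d :=
  fun i => x i + y i.
Definition psub (R : realType) (N : nat) (d : 'I_N -> nat) (x y : profile R d) : profile R d :=
  fun i => x i - y i.

(* (y, x_{-i}) : replace the i-th block of x by y. *)
Definition upd (R : realType) (N : nat) (d : 'I_N -> nat) (x : profile R d) (i : 'I_N) (y : 'rV[R]_(d i))
  : profile R d :=
  fun j => match (@eqP _ i j) with
           | ReflectT e => eq_rect i (fun k => 'rV[R]_(d k)) y j e
           | ReflectF _ => x j
           end.
Arguments upd {R N d} x i y.

Definition in_prod (R : realType) (N : nat) (d : 'I_N -> nat) (X : forall i : 'I_N, set 'rV[R]_(d i))
  (x : profile R d) : Prop := forall i, X i (x i).

Definition has_gradient (R : realType) (N : nat) (d : 'I_N -> nat) (f : profile R d -> R)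
  (x g : profile R d) : Prop :=
  forall eps : R, 0 < eps -> exists2 delta : R, 0 < delta &
    forall h : profile R d, pnorm h < delta ->
      `| f (padd x h) - f x - pdot g h | <= eps * pnorm h.

Definition monotone_game (R : realType) (N : nat) (d : 'I_N -> nat) (X : forall i : 'I_N, set 'rV[R]_(d i))
  (gv : 'I_N -> profile R d -> profile R d) : Prop :=
  forall x y : profile R d, in_prod X x -> in_prod X y ->
    \sum_(i < N) dotv (gv i x i - gv i y i) (x i - y i) <= 0.

Definition nash_eq (R : realType) (N : nat) (d : 'I_N -> nat) (X : forall i : 'I_N, set 'rV[R]_(d i))
  (v : 'I_N -> profile R d -> R) (p : profile R d) : Prop :=
  in_prod X p /\
  forall i (y : 'rV[R]_(d i)), X i y -> v i (upd p i y) <= v i p.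

Definition Greg (R : realType) n (x y : 'rV[R]_n) : R := (enorm (x - y)) ^+ 2 / 2.

Definition perturbed_eq (R : realType) (N : nat) (d : 'I_N -> nat) (X : forall i : 'I_N, set 'rV[R]_(d i))
  (v : 'I_N -> profile R d -> R) (mu : R) (sigma p : profile R d) : Prop :=
  in_prod X p /\
  forall i (y : 'rV[R]_(d i)), X i y ->
    v i (upd p i y) - mu * Greg y (sigma i) <= v i p - mu * Greg (p i) (sigma i).

From HB Require Import structures.
From mathcomp Require Import all_boot all_order all_algebra.
From mathcomp Require Import all_classical all_reals all_analysis.
From mathcomp Require Import lra ring.
Import Order.TTheory GRing.Theory Num.Theory.
Import numFieldNormedType.Exports.
Local Open Scope classical_set_scope.
Local Open Scope ring_scope.

(* Write F for the pseudo-gradient of the game, a_k = |pi^{mu,sigma^k} - sigma^k|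
   (the residual), b_k = |pi^* - sigma^k| and q_k = |pi^* - pi^{mu,sigma^k}|.
   1. Euclidean geometry of profiles: bilinearity, Cauchy-Schwarz, triangle
      inequality and the three-point identity.
   2. First-order optimality: a block maximiser of a differentiable payoff
      minus (m/2)|. - s|^2 over a convex set satisfies a variational inequality;
      summed over the players, perturbed and Nash equilibria solve the
      regularised variational inequality of the game.
   3. Monotonicity of F then gives q_k^2 + a_k^2 <= b_k^2, nonexpansiveness of
      sigma |-> pi^{mu,sigma}, and hence b_(k+1) <= q_k + dl a_k and
      a_(k+1) <= (1 + 2 dl) a_k, where dl = c^(-T) <= 1/(64 K).
   4. A scalar recurrence argument turns these into K a_(K-1)^2 <= 8 b_0^2,
      which is stronger than the stated bound (the zeta/mu term is only
      needed to be nonnegative). *)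

Section EuclideanAlgebra.
Context {R : realType}.

Lemma dotvDl {n} (u v w : 'rV[R]_n) : dotv (u + v) w = dotv u w + dotv v w.
Proof. by rewrite /dotv -big_split; apply: eq_bigr => j _; rewrite mxE mulrDl. Qed.

Lemma dotvZl {n} a (u w : 'rV[R]_n) : dotv (a *: u) w = a * dotv u w.
Proof. by rewrite /dotv mulr_sumr; apply: eq_bigr => j _; rewrite mxE mulrA. Qed.

Lemma dotvNl {n} (u w : 'rV[R]_n) : dotv (- u) w = - dotv u w.
Proof. by rewrite -scaleN1r dotvZl mulN1r. Qed.

Lemma dotvBl {n} (u v w : 'rV[R]_n) : dotv (u - v) w = dotv u w - dotv v w.
Proof. by rewrite dotvDl dotvNl. Qed.

Lemma dotvC {n} (u w : 'rV[R]_n) : dotv u w = dotv w u.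
Proof. by apply: eq_bigr => j _; rewrite mulrC. Qed.

Lemma dotvDr {n} (u v w : 'rV[R]_n) : dotv w (u + v) = dotv w u + dotv w v.
Proof. by rewrite dotvC dotvDl !(dotvC w). Qed.

Lemma dotvZr {n} a (u w : 'rV[R]_n) : dotv w (a *: u) = a * dotv w u.
Proof. by rewrite dotvC dotvZl dotvC. Qed.

Lemma dotv0r {n} (u : 'rV[R]_n) : dotv u 0 = 0.
Proof. by rewrite -(scale0r 0) dotvZr mul0r. Qed.

Lemma dotv_ge0 {n} (u : 'rV[R]_n) : 0 <= dotv u u.
Proof. by apply: sumr_ge0 => j _; rewrite -expr2 sqr_ge0. Qed.

Lemma enormZ {n} (t : R) (u : 'rV[R]_n) : 0 <= t -> enorm (t *: u) = t * enorm u.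
Proof.
move=> t0; rewrite /enorm dotvZl dotvZr mulrA -expr2 sqrtrM ?sqr_ge0 //.
by rewrite sqrtr_sqr ger0_norm.
Qed.

Lemma Greg_ray {n} (b s w : 'rV[R]_n) t :
  Greg (b + t *: w) s = Greg b s + t * dotv (b - s) w + t ^+ 2 / 2 * dotv w w.
Proof.
rewrite /Greg /enorm !sqr_sqrtr ?dotv_ge0 //.
have -> : b + t *: w - s = (b - s) + t *: w by rewrite addrAC.
move: (b - s) => a.
by rewrite dotvDl !dotvDr !dotvZl !dotvZr (dotvC w a); field.
Qed.

Lemma convex_segment {n} {Y : set 'rV[R]_n} {a b : 'rV[R]_n} {t : R} :
  convex_set Y -> Y a -> Y b -> 0 <= t -> t <= 1 -> Y (a + t *: (b - a)).
Proof.
move=> cY Ya Yb t0 t1.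
have /set_mem := cY b a (Itv01 t0 t1) (mem_set Yb) (mem_set Ya).
by congr Y; rewrite /conv /= scalerBl scale1r scalerBr addrCA.
Qed.

End EuclideanAlgebra.

Section ProfileGeometry.
Context {R : realType} {N : nat} {d : 'I_N -> nat}.
Implicit Types x y z : profile R d.

Definition pscale (a : R) x : profile R d := fun i => a *: x i.

Lemma pdotC x y : pdot x y = pdot y x.
Proof. by apply: eq_bigr => i _; rewrite dotvC. Qed.

Lemma pdotBl x y z : pdot (psub x y) z = pdot x z - pdot y z.
Proof. by rewrite /pdot -sumrB; apply: eq_bigr => i _; rewrite /psub dotvBl. Qed.

Lemma pdotBr x y z : pdot z (psub x y) = pdot z x - pdot z y.
Proof. by rewrite pdotC pdotBl !(pdotC z). Qed.

Lemma pdotZl a x y : pdot (pscale a x) y = a * pdot x y.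
Proof. by rewrite /pdot mulr_sumr; apply: eq_bigr => i _; rewrite dotvZl. Qed.

Lemma pdotZr a x y : pdot y (pscale a x) = a * pdot y x.
Proof. by rewrite pdotC pdotZl pdotC. Qed.

Lemma pdot_ge0 x : 0 <= pdot x x.
Proof. by apply: sumr_ge0 => i _; exact: dotv_ge0. Qed.

Lemma pnorm_ge0 x : 0 <= pnorm x.
Proof. exact: sqrtr_ge0. Qed.

Lemma pnorm_sqr x : pnorm x ^+ 2 = pdot x x.
Proof. by rewrite sqr_sqrtr // pdot_ge0. Qed.

Lemma pnorm_eq0_pdot x y : pnorm x = 0 -> pdot x y = 0.
Proof.
move/(congr1 (fun r => r ^+ 2)); rewrite pnorm_sqr expr0n /= => xx0.
rewrite /pdot big1 // => i _; rewrite /dotv big1 // => j _.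
have xi0 : dotv (x i) (x i) = 0 := psumr_eq0P (fun i _ => dotv_ge0 (x i)) xx0 (i := i) isT.
have /eqP := psumr_eq0P (fun j _ => sqr_ge0 (x i 0 j)) xi0 (i := j) isT.
by rewrite mulf_eq0 orbb => /eqP ->; rewrite mul0r.
Qed.

(* The Cauchy-Schwarz inequality, from 0 <= |b x - a y|^2 with a = |x|, b = |y|. *)
Lemma pdot_le_pnorm x y : pdot x y <= pnorm x * pnorm y.
Proof.
have [x0|x0] := eqVneq (pnorm x) 0; first by rewrite pnorm_eq0_pdot // x0 mul0r.
have [y0|y0] := eqVneq (pnorm y) 0.
  by rewrite pdotC pnorm_eq0_pdot // y0 mulr0.
have := pdot_ge0 (psub (pscale (pnorm y) x) (pscale (pnorm x) y)).
rewrite !pdotBl !pdotBr !pdotZl !pdotZr (pdotC y x) -!pnorm_sqr => h.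
have xy0 : 0 < pnorm x * pnorm y by rewrite mulr_gt0 // lt0r ?x0 ?y0 pnorm_ge0.
rewrite -subr_ge0 -(pmulr_rge0 _ xy0); nra.
Qed.

Lemma pnorm_sqr_split x y z :
  pnorm (psub x z) ^+ 2 =
  pnorm (psub x y) ^+ 2 + pnorm (psub y z) ^+ 2 + 2 * pdot (psub x y) (psub y z).
Proof.
rewrite !pnorm_sqr !pdotBl !pdotBr (pdotC y x) (pdotC z x) (pdotC z y); ring.
Qed.

Lemma pnormBC x y : pnorm (psub x y) = pnorm (psub y x).
Proof. by rewrite /pnorm !pdotBl !pdotBr (pdotC x y); congr Num.sqrt; ring. Qed.

Lemma pnorm_triangle x y z : pnorm (psub x z) <= pnorm (psub x y) + pnorm (psub y z).
Proof.
rewrite -ler_sqr ?nnegrE ?addr_ge0 ?pnorm_ge0 // (pnorm_sqr_split x y z) sqrrD.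
by have := pdot_le_pnorm (psub x y) (psub y z); lra.
Qed.
End ProfileGeometry.

Section BlockOptimality.
Context {R : realType} {N : nat} {d : 'I_N -> nat}.

Lemma upd_same (x : profile R d) i (y : 'rV[R]_(d i)) : upd x i y i = y.
Proof.
rewrite /upd; case: (@eqP _ i i) => [e|] //.
by rewrite (eq_irrelevance e erefl).
Qed.

Lemma upd_other (x : profile R d) i (y : 'rV[R]_(d i)) j : i != j -> upd x i y j = x j.
Proof. by rewrite /upd => ne; case: (@eqP _ i j) => // e; rewrite e eqxx in ne. Qed.

Definition pblock {i} (z : 'rV[R]_(d i)) : profile R d := upd (fun j => 0) i z.

Lemma padd_pblock (p : profile R d) i (z : 'rV[R]_(d i)) :
  padd p (pblock z) = upd p i (p i + z).
Proof.
apply: functional_extensionality_dep => j; rewrite /padd /pblock.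
have [<-|ne] := eqVneq i j; first by rewrite !upd_same.
by rewrite !upd_other // addr0.
Qed.

Lemma pdot_pblock (g : profile R d) i (z : 'rV[R]_(d i)) :
  pdot g (pblock z) = dotv (g i) z.
Proof.
rewrite /pdot (bigD1 i) //= /pblock upd_same big1 ?addr0 // => j ne.
by rewrite upd_other ?dotv0r // eq_sym.
Qed.

Lemma pnorm_pblock i (z : 'rV[R]_(d i)) : pnorm (pblock z) = enorm z.
Proof. by rewrite /pnorm pdot_pblock /pblock upd_same. Qed.

Lemma partial_gradient {f : profile R d -> R} {p g : profile R d} i {eps : R} :
  has_gradient f p g -> 0 < eps ->
  exists2 del : R, 0 < del & forall z : 'rV[R]_(d i), enorm z < del ->
    `| f (upd p i (p i + z)) - f p - dotv (g i) z | <= eps * enorm z.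
Proof.
move=> hg eps0; have [del del0 hdel] := hg eps eps0.
exists del => // z; rewrite -pnorm_pblock -padd_pblock -pdot_pblock.
exact: hdel.
Qed.

(* Moving from p i a small step t towards y changes the objective by
   t <g_i - m (p_i - s), y - p_i> up to o(t), which must therefore be <= 0. *)
Lemma block_first_order {f : profile R d -> R} {p g : profile R d} {i}
  {Y : set 'rV[R]_(d i)} {m : R} {s : 'rV[R]_(d i)} :
  convex_set Y -> Y (p i) -> has_gradient f p g -> 0 <= m ->
  (forall y, Y y -> f (upd p i y) - m * Greg y s <= f p - m * Greg (p i) s) ->
  forall y, Y y -> dotv (g i - m *: (p i - s)) (y - p i) <= 0.
Proof.
move=> cY Ypi hg m0 hopt y Yy.
set w := y - p i; set nw := enorm w; set W := dotv w w.
have nw0 : 0 <= nw := sqrtr_ge0 _.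
have W0 : 0 <= W := dotv_ge0 w.
rewrite dotvBl dotvZl; set L := _ - _.
apply/ler_addgt0Pr => e e0; rewrite add0r.
set eps := e / (2 * (nw + 1)).
have eps0 : 0 < eps by rewrite divr_gt0 // mulr_gt0 // ltr_wpDl.
have eps_nw : eps * nw <= e / 2.
  have : eps * (2 * (nw + 1)) = e by rewrite divfK // gt_eqF // mulr_gt0 // ltr_wpDl.
  lra.
have [del del0 hdel] := partial_gradient i hg eps0.
(* a step size small for the gradient remainder and for the quadratic term *)
set t := Num.min 1 (Num.min (del / (nw + 1)) (e / (m * W + 1))).
have t0 : 0 < t by rewrite !lt_min ltr01 !divr_gt0 // ?ltr_wpDl // mulr_ge0.
have t1 : t <= 1 by rewrite ge_min lexx.
have t_del : t * (nw + 1) <= del.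
  by rewrite -ler_pdivlMr ?ltr_wpDl // !ge_min lexx orbT.
have t_quad : t * (m * W + 1) <= e.
  by rewrite -ler_pdivlMr ?ltr_wpDl ?mulr_ge0 // !ge_min lexx !orbT.
have tnw : t * nw < del by lra.
have := hopt _ (convex_segment cY Ypi Yy (ltW t0) t1); rewrite Greg_ray -/w -/W.
have := hdel (t *: w); rewrite enormZ ?(ltW t0) // -/nw dotvZr.
move=> /(_ tnw); rewrite ler_norml => /andP[grad _] opt.
have tL : t * L <= t * (eps * nw + m * t * W / 2) by rewrite /L; lra.
rewrite ler_pM2l // in tL.
have : m * t * W <= e by nra.
lra.
Qed.

End BlockOptimality.

Definition pseudo_gradient {R : realType} {N : nat} {d : 'I_N -> nat}
  (gv : 'I_N -> profile R d -> profile R d) (p : profile R d) : profile R d :=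
  fun i => gv i p i.

Definition regularized_vi {R : realType} {N : nat} {d : 'I_N -> nat}
  (X : forall i : 'I_N, set 'rV[R]_(d i)) (gv : 'I_N -> profile R d -> profile R d)
  (p : profile R d) (m : R) (s : profile R d) : Prop :=
  forall y, in_prod X y ->
    pdot (psub (pseudo_gradient gv p) (pscale m (psub p s))) (psub y p) <= 0.

Section VariationalInequalities.
Context {R : realType} {N : nat} {d : 'I_N -> nat}.
Context {X : forall i : 'I_N, set 'rV[R]_(d i)}.
Context {v : 'I_N -> profile R d -> R} {gv : 'I_N -> profile R d -> profile R d}.
Notation vi := (regularized_vi X gv).

Section Equilibria.
Hypothesis convexX : forall i, convex_set (X i).
Hypothesis gradient_v : forall i x, in_prod X x -> has_gradient (v i) x (gv i x).

Lemma perturbed_eq_vi {mu s p} : 0 <= mu -> perturbed_eq X v mu s p -> vi p mu s.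
Proof.
move=> mu0 [Xp opt] y Xy; apply: sumr_le0 => i _.
exact: block_first_order (convexX i) (Xp i) (gradient_v i p Xp) mu0 (opt i) _ (Xy i).
Qed.

Lemma nash_eq_vi {p} : nash_eq X v p -> vi p 0 p.
Proof.
move=> [Xp opt] y Xy; apply: sumr_le0 => i _.
apply: block_first_order (convexX i) (Xp i) (gradient_v i p Xp) (lexx 0) _ _ (Xy i).
by move=> z Xz; rewrite !mul0r !subr0; exact: opt.
Qed.

End Equilibria.

Hypothesis monoF : monotone_game X gv.

(* Adding two such inequalities, each tested at the other's solution, the
   pseudo-gradient terms cancel by monotonicity. *)
Lemma vi_monotone {p q m m' s s'} :
  in_prod X p -> in_prod X q -> vi p m s -> vi q m' s' ->
  m * pdot (psub p s) (psub p q) + m' * pdot (psub q s') (psub q p) <= 0.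
Proof.
move=> Xp Xq vip viq.
have : pdot (psub (pseudo_gradient gv p) (pseudo_gradient gv q)) (psub p q) <= 0.
  exact: monoF p q Xp Xq.
have := vip q Xq; have := viq p Xp.
rewrite !(pdotBl, pdotBr, pdotZl) (pdotC q p); lra.
Qed.

Lemma perturbed_eq_nonexpansive {mu p q s s'} : 0 < mu ->
  in_prod X p -> in_prod X q -> vi p mu s -> vi q mu s' ->
  pnorm (psub p q) <= pnorm (psub s s').
Proof.
move=> mu0 Xp Xq vip viq.
have := vi_monotone Xp Xq vip viq; rewrite -mulrDr pmulr_rle0 //.
have -> : pdot (psub p s) (psub p q) + pdot (psub q s') (psub q p) =
          pnorm (psub p q) ^+ 2 - pdot (psub s s') (psub p q).
  by rewrite pnorm_sqr !pdotBl !pdotBr; ring.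
have := pdot_le_pnorm (psub s s') (psub p q).
have := pnorm_ge0 (psub p q); have := pnorm_ge0 (psub s s'); nra.
Qed.

Lemma perturbed_eq_closer {mu p s pstar} : 0 < mu ->
  in_prod X p -> in_prod X pstar -> vi p mu s -> vi pstar 0 pstar ->
  pnorm (psub pstar p) ^+ 2 + pnorm (psub p s) ^+ 2 <= pnorm (psub pstar s) ^+ 2.
Proof.
move=> mu0 Xp Xs vip vis.
have := vi_monotone Xp Xs vip vis; rewrite mul0r addr0 pmulr_rle0 //.
rewrite (pnorm_sqr_split pstar p s) (pdotC (psub pstar p)) !pdotBr; lra.
Qed.

Lemma perturbed_residual_step {mu p p' s s'} : 0 < mu ->
  in_prod X p -> in_prod X p' -> vi p mu s -> vi p' mu s' ->
  pnorm (psub p' s') <= pnorm (psub p s) + 2 * pnorm (psub p s').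
Proof.
move=> mu0 Xp Xp' vip vip'.
have := pnorm_triangle p' p s'.
have := perturbed_eq_nonexpansive mu0 Xp' Xp vip' vip.
have := pnorm_triangle s' p s; rewrite (pnormBC s' p); lra.
Qed.

End VariationalInequalities.

(* For the k-th anchor write a k for the residual
   |pi^{mu,sigma^k} - sigma^k|, b k for the distance |pi^* - sigma^k| and q k for
   |pi^* - pi^{mu,sigma^k}|; dl = c^(-T) is the relative accuracy of the updates. *)
Section AnchorRecurrence.
Context {R : realType}.
Context {a b q : nat -> R} {dl : R} {K : nat}.
Hypothesis K_gt0 : (0 < K)%N.
Hypothesis dl_ge0 : 0 <= dl.
Hypothesis Kdl_small : K%:R * dl <= 1 / 64.
Hypothesis a_ge0 : forall k, 0 <= a k.
Hypothesis b_ge0 : forall k, 0 <= b k.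
Hypothesis q_ge0 : forall k, 0 <= q k.
Hypothesis closer : forall k, (k < K)%N -> q k ^+ 2 + a k ^+ 2 <= b k ^+ 2.
Hypothesis dist_step : forall k, (k < K)%N -> b k.+1 <= q k + a k * dl.
Hypothesis residual_step : forall k, (k.+1 < K)%N -> a k.+1 <= (1 + 2 * dl) * a k.

Let kdl_small {k} : (k <= K)%N -> k%:R * dl <= 1 / 64.
Proof. by move=> kK; apply: le_trans Kdl_small; rewrite ler_wpM2r // ler_nat. Qed.

(* Both legs of the right triangle (pi^*, pi^{mu,sigma^k}, sigma^k) are shorter
   than its hypotenuse. *)
Let le_dist {k} : (k < K)%N -> a k <= b k /\ q k <= b k.
Proof.
move=> kK; have := closer _ kK; have := a_ge0 k; have := q_ge0 k; have := b_ge0 k.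
by move=> ? ? ? ?; split; rewrite -ler_sqr ?nnegrE //; nra.
Qed.

Lemma dist_bounded k : (k <= K)%N -> b k <= 2 * b 0%N.
Proof.
have dl0 := dl_ge0; have b00 := b_ge0 0%N.
move=> kK; suff grow : b k <= (1 + 2 * k%:R * dl) * b 0%N.
  apply: le_trans grow _; rewrite ler_wpM2r //.
  by have := kdl_small kK; lra.
elim: k kK => [|k IH] kK; first by rewrite mulr0 mul0r addr0 mul1r.
have [ak qk] := le_dist kK; have dk := dist_step _ kK; have a0 := a_ge0 k.
have ih := IH (ltnW kK); have kdl := kdl_small (ltnW kK).
have one_step : b k.+1 <= (1 + dl) * b k by nra.
have factor : (1 + dl) * (1 + 2 * k%:R * dl) <= 1 + 2 * k.+1%:R * dl.
  by rewrite -[k.+1%:R]natr1; nra.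
apply: le_trans one_step (le_trans _ (ler_wpM2r b00 factor)).
by rewrite -(mulrA (1 + dl)) ler_wpM2l //; lra.
Qed.

(* Each step pays for a k^2 with the decrease of b^2, up to a small error:
   b (k+1)^2 <= (q k + dl a k)^2 <= q k^2 + 3 dl b k^2 <= b k^2 - a k^2 + 12 dl b 0^2. *)
Lemma residual_energy k : (k < K)%N ->
  a k ^+ 2 <= b k ^+ 2 - b k.+1 ^+ 2 + 12 * dl * b 0%N ^+ 2.
Proof.
move=> kK; have dl0 := dl_ge0; have [ak qk] := le_dist kK.
have a0 := a_ge0 k; have q0 := q_ge0 k; have b0 := b_ge0 k.
have dl1 : dl <= 1 by have := kdl_small K_gt0; rewrite mul1r; lra.
have step : b k.+1 ^+ 2 <= (q k + a k * dl) ^+ 2.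
  by rewrite ler_sqr ?nnegrE ?addr_ge0 ?mulr_ge0 ?b_ge0 // dist_step.
have qa : q k * a k * dl <= b k ^+ 2 * dl.
  by rewrite ler_wpM2r // expr2; apply: ler_pM.
have aa : a k ^+ 2 * dl ^+ 2 <= b k ^+ 2 * dl.
  apply: ler_pM; rewrite ?sqr_ge0 ?ler_sqr ?nnegrE //.
  by rewrite expr2; nra.
have bb : b k ^+ 2 * dl <= (2 * b 0%N) ^+ 2 * dl.
  by rewrite ler_wpM2r // ler_sqr ?nnegrE ?mulr_ge0 ?b_ge0 // dist_bounded // ltnW.
have := closer _ kK; rewrite sqrrD exprMn in step bb; lra.
Qed.

(* Telescoping: the residuals are square-summable, uniformly in K. *)
Lemma residual_sum : \sum_(0 <= k < K) a k ^+ 2 <= 2 * b 0%N ^+ 2.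
Proof.
apply: le_trans (ler_sum_nat
  (G := fun k => - (b k.+1 ^+ 2 - b k ^+ 2) + 12 * dl * b 0%N ^+ 2) _) _.
  by move=> k /andP[_ kK]; rewrite opprB; exact: residual_energy.
rewrite big_split /= sumrN telescope_sumr // sumr_const_nat subn0 -[_ *+ K]mulr_natr.
have := ler_wpM2r (sqr_ge0 (b 0%N)) Kdl_small.
have := sqr_ge0 (b K); have := sqr_ge0 (b 0%N); lra.
Qed.

Lemma residual_growth j k : (k + j < K)%N -> a (k + j)%N <= (1 + 4 * j%:R * dl) * a k.
Proof.
have dl0 := dl_ge0; have ak := a_ge0 k.
elim: j => [|j IH] kjK; first by rewrite addn0 mulr0 mul0r addr0 mul1r.
rewrite addnS in kjK *; have ih := IH (ltnW kjK).
have jdl : j.+1%:R * dl <= 1 / 64.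
  by apply: kdl_small; apply: leq_trans (ltnW kjK); rewrite ltnS leq_addl.
have factor : (1 + 2 * dl) * (1 + 4 * j%:R * dl) <= 1 + 4 * j.+1%:R * dl.
  by rewrite -[j.+1%:R]natr1 in jdl *; nra.
apply: le_trans (residual_step _ kjK) (le_trans _ (ler_wpM2r ak factor)).
by rewrite -(mulrA (1 + 2 * dl)) ler_wpM2l //; lra.
Qed.

(* Summing K copies of a (K-1)^2 <= 4 a k^2 against residual_sum. *)
Lemma last_residual_bound : K%:R * a K.-1 ^+ 2 <= 8 * b 0%N ^+ 2.
Proof.
have last_le k : (k < K)%N -> a K.-1 ^+ 2 <= 4 * a k ^+ 2.
  move=> kK; have Kk : (k + (K.-1 - k))%N = K.-1 by rewrite subnKC // -ltnS prednK.
  have := residual_growth (K.-1 - k) k; rewrite Kk prednK // => /(_ (leqnn K)).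
  have := kdl_small (leq_trans (leq_subr k K.-1) (leq_pred K)) => jdl grow.
  have two : a K.-1 <= 2 * a k.
    by apply: le_trans grow _; rewrite ler_wpM2r ?a_ge0 //; lra.
  have := a_ge0 K.-1; have := a_ge0 k; nra.
have -> : K%:R * a K.-1 ^+ 2 = \sum_(0 <= k < K) a K.-1 ^+ 2.
  by rewrite sumr_const_nat subn0 mulr_natl.
apply: le_trans (ler_sum_nat (G := fun k => 4 * a k ^+ 2) _) _.
  by move=> k /andP[_ kK]; exact: last_le.
by rewrite -mulr_sumr; have := residual_sum; lra.
Qed.

End AnchorRecurrence.

(* The choice of T makes every update accurate to relative precision
   c^(-T) <= 1 / (64 K); the hypothesis even gives c^T >= 64 K^3. *)
Lemma anchor_accuracy {R : realType} {c T : R} {K : nat} :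
  (0 < K)%N -> 1 < c -> Num.max (3 / ln c * ln K%:R + ln 64 / ln c) 1 <= T ->
  K%:R * c `^ (- T) <= 1 / 64.
Proof.
move=> K_gt0 c1 hT.
have c0 : 0 < c by lra.
have lnc0 : 0 < ln c by exact: ln_gt0.
have K0 : 0 < K%:R :> R by rewrite ltr0n.
have lnK0 : 0 <= ln (K%:R : R) by apply: ln_ge0; rewrite ler1n.
have T_ge : 3 / ln c * ln K%:R + ln 64 / ln c <= T by apply: le_trans hT; rewrite le_max lexx.
have cT : K%:R * 64 <= c `^ T.
  apply: le_trans (ler_powR (ltW c1) T_ge).
  have -> : (3 / ln c * ln K%:R + ln 64 / ln c) = (3 * ln K%:R + ln 64) / ln c.
    by field; rewrite gt_eqF.
  rewrite /powR (gt_eqF c0) divfK ?gt_eqF //.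
  rewrite -[X in X <= _]lnK ?posrE ?mulr_gt0 // ler_expR lnM ?posrE //; lra.
by rewrite powRN -ler_pdivlMl // mul1r -invfM lef_pV2 ?posrE ?mulr_gt0 ?powR_gt0.
Qed.

Lemma sqrt_bound {R : realType} {K : nat} {x y z : R} :
  (0 < K)%N -> 0 <= x -> 0 <= y -> 0 <= z -> K%:R * x ^+ 2 <= 8 * y ^+ 2 ->
  x <= 2 * Num.sqrt 2 / Num.sqrt K%:R * Num.sqrt (y * (8 * y + z)).
Proof.
move=> K_gt0 x0 y0 z0 Kxy.
have K0 : 0 < K%:R :> R by rewrite ltr0n.
have sK0 : 0 < Num.sqrt (K%:R : R) by rewrite sqrtr_gt0.
rewrite -ler_sqr ?nnegrE ?mulr_ge0 ?divr_ge0 ?sqrtr_ge0 //.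
rewrite !exprMn exprVn !sqr_sqrtr ?mulr_ge0 ?addr_ge0 ?ler0n // ?mulr_ge0 //.
rewrite mulrAC ler_pdivlMr // mulrC.
have := sqr_ge0 y; have : 0 <= y * z by rewrite mulr_ge0.
lra.
Qed.

Theorem lemma7 (R : realType) (N : nat) (d : 'I_N -> nat)
  (X : forall i : 'I_N, set 'rV[R]_(d i))
  (v : 'I_N -> profile R d -> R)
  (gv : 'I_N -> profile R d -> profile R d)
  (mu : R) (K : nat) (c T zeta : R)
  (sigma : nat -> profile R d) (pmu : nat -> profile R d) (pstar : profile R d) :
  (0 < N)%N ->
  (forall i, X i !=set0) ->
  (forall i, compact (X i)) ->
  (forall i, convex_set (X i)) ->
  (forall i x, in_prod X x -> has_gradient (v i) x (gv i x)) ->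
  monotone_game X gv ->
  0 < mu ->
  (1 <= K)%N ->
  1 < c ->
  Num.max (3 / ln c * ln K%:R + ln 64 / ln c) 1 <= T ->
  (forall k, (k <= K)%N -> in_prod X (sigma k)) ->
  (forall k, (k < K)%N -> perturbed_eq X v mu (sigma k) (pmu k)) ->
  (forall k, (k < K)%N ->
     pnorm (psub (pmu k) (sigma k.+1)) <= pnorm (psub (pmu k) (sigma k)) * c `^ (- T)) ->
  (forall x, in_prod X x -> Num.sqrt (\sum_(i < N) enorm (gv i x i) ^+ 2) <= zeta) ->
  nash_eq X v pstar ->
  pnorm (psub (pmu K.-1) (sigma K.-1)) <=
    2 * Num.sqrt 2 / Num.sqrt K%:R *
    Num.sqrt (pnorm (psub pstar (sigma 0%N)) *
              (8 * pnorm (psub pstar (sigma 0%N)) + zeta / mu)).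
Proof.
move=> _ _ _ convexX gradient_v monoF mu0 K_gt0 c1 T_ge sigmaX pert update zeta_ub nash.
have Xstar : in_prod X pstar by case: nash.
have vi_star := nash_eq_vi convexX gradient_v nash.
have X_k k (kK : (k < K)%N) : in_prod X (pmu k) by case: (pert k kK).
have vi_k k (kK : (k < K)%N) := perturbed_eq_vi convexX gradient_v (ltW mu0) (pert k kK).
have closer k (kK : (k < K)%N) :=
  perturbed_eq_closer monoF mu0 (X_k k kK) Xstar (vi_k k kK) vi_star.
have dist_step k (kK : (k < K)%N) :
    pnorm (psub pstar (sigma k.+1)) <=
    pnorm (psub pstar (pmu k)) + pnorm (psub (pmu k) (sigma k)) * c `^ (- T).
  exact: le_trans (pnorm_triangle _ (pmu k) _) (lerD (lexx _) (update k kK)).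
have residual_step k (kK : (k.+1 < K)%N) :
    pnorm (psub (pmu k.+1) (sigma k.+1)) <=
    (1 + 2 * c `^ (- T)) * pnorm (psub (pmu k) (sigma k)).
  have := update k (ltnW kK).
  have := perturbed_residual_step monoF mu0 (X_k k (ltnW kK)) (X_k k.+1 kK)
    (vi_k k (ltnW kK)) (vi_k k.+1 kK).
  lra.
have := last_residual_bound K_gt0 (powR_ge0 c (- T)) (anchor_accuracy K_gt0 c1 T_ge)
  (fun k => pnorm_ge0 _) (fun k => pnorm_ge0 _) (fun k => pnorm_ge0 _)
  closer dist_step residual_step.
apply: sqrt_bound; rewrite ?pnorm_ge0 ?divr_ge0 ?(ltW mu0) //.
exact: le_trans (sqrtr_ge0 _) (zeta_ub _ (sigmaX 0%N (leq0n K))).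
Qed.
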